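(* For every $n\ge1$ and every $X\in\mathrm{s}^n\mathcal S$, the category of multisimplices $\Delta X$ is a Reedy category with fibrant constants.
   Context: $\mathrm{s}^n\mathcal S$ is the category of $(n+1)$-simplicial sets, with multisimplices indexed by $(p_n,\dots,p_1,q)$; $\Delta[p_n,\dots,p_1,q]$ denotes the standard (representable) multisimplex and $\Delta[-]\subset\mathrm{s}^n\mathcal S$ the full subcategory spanned by the standard multisimplices. The category of multisimplices of $X$ is the over category $\Delta X=\Delta[-]\downarrow X$, with its natural Reedy structure (degree of $\Delta[p_n,\dots,p_1,q]\to X$ being $p_n+\cdots+p_1+q$, direct maps those induced by tuples of injective maps, inverse maps those induced by tuples of surjective maps). A Reedy category $\mathcal R$ has fibrant constants if for every model category $\mathcal M$ and every fibrant object $Z$ of $\mathcal M$, the constant $\mathcal R$-diagram at $Z$ is fibrant in the Reedy model structure on $\mathcal M^{\mathcal R}$ (in the sense of Hirschhorn, Model categories and their localizations, 15.10.1). *)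

From Stdlib Require Import FunctionalExtensionality ProofIrrelevance.
From HB Require Import structures.
From mathcomp Require Import all_boot.

Set Implicit Arguments.
Unset Strict Implicit.
Unset Printing Implicit Defensive.
Set Universe Polymorphism.

Record Category := {
  ob :> Type;
  hom : ob -> ob -> Type;
  cid : forall a, hom a a;
  ccomp : forall a b c, hom b c -> hom a b -> hom a c;
  ccomp_idl : forall a b (f : hom a b), ccomp (cid b) f = f;
  ccomp_idr : forall a b (f : hom a b), ccomp f (cid a) = f;
  ccomp_assoc : forall a b c d (f : hom a b) (g : hom b c) (h : hom c d),
      ccomp h (ccomp g f) = ccomp (ccomp h g) f }.

Arguments hom {_} a b.
Arguments cid {_} a.
Arguments ccomp {_ _ _ _} g f.

Notation "g \oc f" := (ccomp g f) (at level 40, left associativity).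

Record Functor (I C : Category) := {
  fobj :> I -> C;
  fmap : forall a b : I, hom a b -> hom (fobj a) (fobj b);
  fmap_id : forall a : I, fmap (cid a) = cid (fobj a);
  fmap_comp : forall (a b c : I) (f : hom a b) (g : hom b c),
      fmap (g \oc f) = fmap g \oc fmap f }.

Arguments fmap {I C} _ {a b} u.

Definition is_cone (I C : Category) (D : Functor I C) (X : C)
  (c : forall i : I, hom X (D i)) : Prop :=
  forall (i j : I) (u : hom i j), fmap D u \oc c i = c j.

Definition is_cocone (I C : Category) (D : Functor I C) (X : C)
  (c : forall i : I, hom (D i) X) : Prop :=
  forall (i j : I) (u : hom i j), c j \oc fmap D u = c i.

Record Limit (I C : Category) (D : Functor I C) := {
  lim_ob : C;
  lim_proj : forall i : I, hom lim_ob (D i);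
  lim_cone : is_cone lim_proj;
  lim_univ : forall (X : C) (c : forall i : I, hom X (D i)), is_cone c ->
      exists! h : hom X lim_ob, forall i : I, lim_proj i \oc h = c i }.

Record Colimit (I C : Category) (D : Functor I C) := {
  colim_ob : C;
  colim_inj : forall i : I, hom (D i) colim_ob;
  colim_cocone : is_cocone colim_inj;
  colim_univ : forall (X : C) (c : forall i : I, hom (D i) X), is_cocone c ->
      exists! h : hom colim_ob X, forall i : I, h \oc colim_inj i = c i }.

Definition is_terminal (C : Category) (T : C) : Prop :=
  forall X : C, exists! h : hom X T, True.

Definition MorClass (C : Category) := forall a b : C, hom a b -> Prop.

Definition mor_inter (C : Category) (K1 K2 : MorClass C) : MorClass C :=
  fun a b f => K1 a b f /\ K2 a b f.

Definition lifting (C : Category) (a b x y : C) (i : hom a b) (p : hom x y) : Prop :=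
  forall (u : hom a x) (v : hom b y), p \oc u = v \oc i ->
    exists h : hom b x, h \oc i = u /\ p \oc h = v.

Definition is_retract (C : Category) (a b c d : C) (f : hom a b) (g : hom c d) : Prop :=
  exists (i1 : hom a c) (r1 : hom c a) (i2 : hom b d) (r2 : hom d b),
    [/\ r1 \oc i1 = cid a, r2 \oc i2 = cid b,
        g \oc i1 = i2 \oc f & f \oc r1 = r2 \oc g].

Definition closed_under_retracts (C : Category) (K : MorClass C) : Prop :=
  forall (a b c d : C) (f : hom a b) (g : hom c d),
    is_retract f g -> K c d g -> K a b f.

Definition two_out_of_three (C : Category) (W : MorClass C) : Prop :=
  forall (a b c : C) (f : hom a b) (g : hom b c),
    [/\ W _ _ f -> W _ _ g -> W _ _ (g \oc f),
        W _ _ f -> W _ _ (g \oc f) -> W _ _ g &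
        W _ _ g -> W _ _ (g \oc f) -> W _ _ f].

(* functorial factorization (Hirschhorn 7.1.1): a functor Map(C) -> C
   (the middle object) with natural maps factoring every f *)
Record FunctorialFactorization (C : Category) (L R : MorClass C) := {
  ff_mid : forall a b : C, hom a b -> C;
  ff_left : forall (a b : C) (f : hom a b), hom a (ff_mid f);
  ff_right : forall (a b : C) (f : hom a b), hom (ff_mid f) b;
  ff_fact : forall (a b : C) (f : hom a b), ff_right f \oc ff_left f = f;
  ff_L : forall (a b : C) (f : hom a b), L _ _ (ff_left f);
  ff_R : forall (a b : C) (f : hom a b), R _ _ (ff_right f);
  ff_map : forall (a b a' b' : C) (f : hom a b) (f' : hom a' b')
      (u : hom a a') (v : hom b b'), f' \oc u = v \oc f ->
      hom (ff_mid f) (ff_mid f');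
  ff_map_left : forall (a b a' b' : C) (f : hom a b) (f' : hom a' b')
      (u : hom a a') (v : hom b b') (e : f' \oc u = v \oc f),
      ff_map e \oc ff_left f = ff_left f' \oc u;
  ff_map_right : forall (a b a' b' : C) (f : hom a b) (f' : hom a' b')
      (u : hom a a') (v : hom b b') (e : f' \oc u = v \oc f),
      ff_right f' \oc ff_map e = v \oc ff_right f;
  ff_map_id : forall (a b : C) (f : hom a b) (e : f \oc cid a = cid b \oc f),
      ff_map e = cid (ff_mid f);
  ff_map_comp : forall (a b a' b' a'' b'' : C) (f : hom a b) (f' : hom a' b')
      (f'' : hom a'' b'') (u : hom a a') (v : hom b b') (u' : hom a' a'')
      (v' : hom b' b'') (e1 : f' \oc u = v \oc f) (e2 : f'' \oc u' = v' \oc f')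
      (e3 : f'' \oc (u' \oc u) = (v' \oc v) \oc f),
      ff_map e3 = ff_map e2 \oc ff_map e1 }.

Record ModelCat := {
  mc_cat :> Category;
  mc_lim : forall (I : Category) (D : Functor I mc_cat), Limit D;
  mc_colim : forall (I : Category) (D : Functor I mc_cat), Colimit D;
  mc_W : MorClass mc_cat;
  mc_Cof : MorClass mc_cat;
  mc_Fib : MorClass mc_cat;
  mc_2of3 : two_out_of_three mc_W;
  mc_ret_W : closed_under_retracts mc_W;
  mc_ret_Cof : closed_under_retracts mc_Cof;
  mc_ret_Fib : closed_under_retracts mc_Fib;
  mc_lift_tcof : forall (a b x y : mc_cat) (i : hom a b) (p : hom x y),
      mc_Cof i -> mc_W i -> mc_Fib p -> lifting i p;
  mc_lift_tfib : forall (a b x y : mc_cat) (i : hom a b) (p : hom x y),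
      mc_Cof i -> mc_Fib p -> mc_W p -> lifting i p;
  mc_fact_tcof_fib :
    inhabited (FunctorialFactorization (mor_inter mc_Cof mc_W) mc_Fib);
  mc_fact_cof_tfib :
    inhabited (FunctorialFactorization mc_Cof (mor_inter mc_Fib mc_W)) }.

Arguments mc_Fib {m} [a b] f.

Definition fibrant (M : ModelCat) (Z : M) : Prop :=
  forall (T : M), is_terminal T -> forall h : hom Z T, mc_Fib h.

Definition not_identity (C : Category) (a b : C) (f : hom a b) : Prop :=
  existT (fun c : C => hom a c) b f <> existT (fun c : C => hom a c) a (cid a).

Record IsReedy (C : Category) (deg : C -> nat) (dir inv : MorClass C) : Prop := {
  dir_id : forall a : C, dir a a (cid a);
  dir_comp : forall (a b c : C) (f : hom a b) (g : hom b c),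
      dir _ _ f -> dir _ _ g -> dir _ _ (g \oc f);
  inv_id : forall a : C, inv a a (cid a);
  inv_comp : forall (a b c : C) (f : hom a b) (g : hom b c),
      inv _ _ f -> inv _ _ g -> inv _ _ (g \oc f);
  dir_deg : forall (a b : C) (f : hom a b),
      dir _ _ f -> not_identity f -> deg a < deg b;
  inv_deg : forall (a b : C) (f : hom a b),
      inv _ _ f -> not_identity f -> deg b < deg a;
  reedy_fact : forall (a b : C) (f : hom a b),
      exists (c : C) (g : hom a c) (h : hom c b),
        [/\ inv _ _ g, dir _ _ h & h \oc g = f];
  reedy_fact_uniq : forall (a b : C) (f : hom a b) (c c' : C)
      (g : hom a c) (h : hom c b) (g' : hom a c') (h' : hom c' b),
      inv _ _ g -> dir _ _ h -> h \oc g = f ->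
      inv _ _ g' -> dir _ _ h' -> h' \oc g' = f ->
      existT (fun c : C => (hom a c * hom c b)%type) c (g, h)
      = existT (fun c : C => (hom a c * hom c b)%type) c' (g', h') }.

Lemma sig_eq_irr (A : Type) (P : A -> Prop) (x y : {a : A | P a}) :
  proj1_sig x = proj1_sig y -> x = y.
Proof.
case: x y => [a pa] [b pb] /= e; subst b.
by rewrite (proof_irrelevance _ pa pb).
Qed.

Section Matching.
Variables (C : Category) (deg : C -> nat) (dir inv : MorClass C).
Hypothesis H : IsReedy deg dir inv.
Variable alpha : C.

Definition match_ob := {b : C & {g : hom alpha b | inv g /\ not_identity g}}.

Definition match_map (x : match_ob) : hom alpha (projT1 x) := proj1_sig (projT2 x).

Definition match_hom (x y : match_ob) :=
  {h : hom (projT1 x) (projT1 y) | inv h /\ h \oc match_map x = match_map y}.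

Definition match_id (x : match_ob) : match_hom x x.
Proof. exists (cid _); split; [exact: (inv_id H) | exact: ccomp_idl]. Defined.

Definition match_comp (x y z : match_ob) (g : match_hom y z) (f : match_hom x y) :
  match_hom x z.
Proof.
exists (proj1_sig g \oc proj1_sig f); split.
  by apply: (inv_comp H); [case: f => ? [] | case: g => ? []].
case: f g => f [_ ef] [g [_ eg]] /=.
by rewrite -ccomp_assoc ef eg.
Defined.

Definition MatchCat : Category.
Proof.
refine (@Build_Category match_ob match_hom match_id match_comp _ _ _).
- by move=> a b f; apply: sig_eq_irr; rewrite /= ccomp_idl.
- by move=> a b f; apply: sig_eq_irr; rewrite /= ccomp_idr.
- by move=> a b c d f g h; apply: sig_eq_irr; rewrite /= ccomp_assoc.
Defined.

(* the diagram  (alpha -> b) |-> D b  whose limit is the matching object *)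
Definition MatchDiag (M : Category) (D : Functor C M) : Functor MatchCat M.
Proof.
refine (@Build_Functor MatchCat M (fun x : match_ob => D (projT1 x))
          (fun x y (h : match_hom x y) => fmap D (proj1_sig h)) _ _).
- by move=> a /=; rewrite fmap_id.
- by move=> a b c f g /=; rewrite fmap_comp.
Defined.

End Matching.

(* A C-diagram D in M is Reedy fibrant (Hirschhorn 15.3.3 with Y = * ):
   for every alpha the matching map D alpha -> M_alpha D is a fibration. *)
Definition reedy_fibrant (C : Category) (deg : C -> nat) (dir inv : MorClass C)
  (H : IsReedy deg dir inv) (M : ModelCat) (D : Functor C M) : Prop :=
  forall (alpha : C)
    (h : hom (D alpha) (lim_ob (mc_lim (MatchDiag H alpha D)))),
    (forall x : match_ob inv alpha,
        lim_proj (mc_lim (MatchDiag H alpha D)) x \oc h = fmap D (match_map x)) ->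
    mc_Fib h.

Definition const_functor (C : Category) (M : Category) (Z : M) : Functor C M.
Proof.
refine (@Build_Functor C M (fun _ => Z) (fun _ _ _ => cid Z) _ _).
- by [].
- by move=> *; rewrite ccomp_idl.
Defined.

Definition has_fibrant_constants (C : Category) (deg : C -> nat) (dir inv : MorClass C)
  (H : IsReedy deg dir inv) : Prop :=
  forall (M : ModelCat) (Z : M), fibrant Z -> reedy_fibrant H (const_functor C Z).

Definition dhom (p q : nat) :=
  {f : 'I_p.+1 -> 'I_q.+1 | forall i j : 'I_p.+1, i <= j -> f i <= f j}.

Definition did (p : nat) : dhom p p :=
  exist (fun f : 'I_p.+1 -> 'I_p.+1 => forall i j : 'I_p.+1, i <= j -> f i <= f j) id (fun i j h => h).

Definition dcomp (p q r : nat) (g : dhom q r) (f : dhom p q) : dhom p r.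
Proof.
exists (fun i => proj1_sig g (proj1_sig f i)).
by move=> i j h; apply: (proj2_sig g); apply: (proj2_sig f).
Defined.

(* multi-indices (p_n, ..., p_1, q), indexed by 'I_n.+1 *)
Definition mindex (n : nat) := 'I_n.+1 -> nat.

Definition mhom (n : nat) (p q : mindex n) := forall i : 'I_n.+1, dhom (p i) (q i).

Definition mid (n : nat) (p : mindex n) : mhom p p := fun i => did (p i).

Definition mcomp (n : nat) (p q r : mindex n) (g : mhom q r) (f : mhom p q) : mhom p r :=
  fun i => dcomp (g i) (f i).

(* an (n+1)-simplicial set: a presheaf on Delta^(n+1) *)
Record MSSet (n : nat) := {
  ms_obj :> mindex n -> Type;
  ms_act : forall p q : mindex n, mhom p q -> ms_obj q -> ms_obj p;
  ms_act_id : forall (p : mindex n) (x : ms_obj p), ms_act (mid p) x = x;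
  ms_act_comp : forall (p q r : mindex n) (f : mhom p q) (g : mhom q r) (x : ms_obj r),
      ms_act (mcomp g f) x = ms_act f (ms_act g x) }.

Arguments ms_act {n} _ {p q} f x.

Lemma mhom_eq (n : nat) (p q : mindex n) (f g : mhom p q) :
  (forall i, proj1_sig (f i) = proj1_sig (g i)) -> f = g.
Proof.
move=> e; apply: functional_extensionality_dep => i; exact: sig_eq_irr.
Qed.

Section DeltaX.
Variables (n : nat) (X : MSSet n).

Definition dx_ob := {p : mindex n & X p}.

Definition dx_hom (a b : dx_ob) :=
  {f : mhom (projT1 a) (projT1 b) | ms_act X f (projT2 b) = projT2 a}.

Definition dx_id (a : dx_ob) : dx_hom a a :=
  exist _ (mid (projT1 a)) (@ms_act_id n X _ (projT2 a)).

Definition dx_comp (a b c : dx_ob) (g : dx_hom b c) (f : dx_hom a b) : dx_hom a c.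
Proof.
exists (mcomp (proj1_sig g) (proj1_sig f)).
by rewrite ms_act_comp (proj2_sig g) (proj2_sig f).
Defined.

Definition DeltaCat : Category.
Proof.
refine (@Build_Category dx_ob dx_hom dx_id dx_comp _ _ _).
- by move=> a b f; apply: sig_eq_irr; apply: mhom_eq.
- by move=> a b f; apply: sig_eq_irr; apply: mhom_eq.
- by move=> a b c d f g h; apply: sig_eq_irr; apply: mhom_eq.
Defined.

Definition delta_deg (a : DeltaCat) : nat := \sum_(i < n.+1) projT1 a i.

Definition delta_dir : MorClass DeltaCat :=
  fun a b (f : dx_hom a b) => forall i, injective (proj1_sig (proj1_sig f i)).

Definition delta_inv : MorClass DeltaCat :=
  fun a b (f : dx_hom a b) =>
    forall i (y : 'I_(projT1 b i).+1), exists x, proj1_sig (proj1_sig f i) x = y.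

End DeltaX.

(* A morphism of multisimplices is a tuple of monotone maps, and a monotone map
   factors uniquely through its image as a surjection followed by an injection.
   Since the degree drops along nonidentity surjections and rises along
   nonidentity injections, this makes Delta X a Reedy category.

   Constants are Reedy fibrant as soon as every matching category is empty or
   has a weakly terminal object: in the second case all projections of the limit
   of a constant diagram at Z agree, so the matching map out of Z is an
   isomorphism; in the first the matching object is terminal.  By the
   Eilenberg-Zilber lemma a multisimplex alpha has a unique degeneration
   alpha -> b onto a nondegenerate b, and every degeneration of alpha factors
   through it.  If it is the identity, the matching category of alpha is empty;
   otherwise it is weakly terminal there. *)

From mathcomp Require Import all_boot.
From Stdlib Require Import FunctionalExtensionality ProofIrrelevance Classical.

Set Implicit Arguments.
Unset Strict Implicit.
Unset Printing Implicit Defensive.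
Set Universe Polymorphism.

Definition weakly_terminal (C : Category) (t : C) := forall x : C, inhabited (hom x t).

Lemma limit_empty_terminal (I C : Category) (D : Functor I C) (L : Limit D) :
  ~ inhabited I -> is_terminal (lim_ob L).
Proof.
move=> emptyI Y; have noI (i : I) : False by apply: emptyI.
have cone : is_cone (fun i : I => match noI i return hom Y (D i) with end).
  by move=> i; case: (noI i).
have [h [_ hU]] := lim_univ L cone.
by exists h; split=> // h' _; apply: hU => i; case: (noI i).
Qed.

Lemma limit_endo_id (I C : Category) (D : Functor I C) (L : Limit D)
    (k : hom (lim_ob L) (lim_ob L)) :
  (forall i, lim_proj L i \oc k = lim_proj L i) -> k = cid (lim_ob L).
Proof.
move=> kproj; have [u [_ uU]] := lim_univ L (lim_cone L).
by rewrite -(uU k kproj); apply: uU => i; apply: ccomp_idr.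
Qed.

(* An isomorphism is a retract of the fibration in its own factorization. *)
Lemma iso_fib (M : ModelCat) (a b : M) (f : hom a b) (g : hom b a) :
  g \oc f = cid a -> f \oc g = cid b -> mc_Fib f.
Proof.
move=> gf fg; case: (mc_fact_tcof_fib M) => F.
apply: (@mc_ret_Fib M _ _ _ _ f (ff_right F f)); last exact: ff_R.
exists (ff_left F f), (g \oc ff_right F f), (cid b), (cid b); split.
- by rewrite -ccomp_assoc ff_fact.
- exact: ccomp_idl.
- by rewrite ff_fact ccomp_idl.
- by rewrite ccomp_assoc fg !ccomp_idl.
Qed.

Section FibrantConstants.
Variables (C : Category) (deg : C -> nat) (dir inv : MorClass C).
Hypothesis H : IsReedy deg dir inv.

Lemma const_match_proj_eq (M : Category) (Z : M) (alpha : C)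
    (L : Limit (MatchDiag H alpha (const_functor C Z))) (x t : MatchCat H alpha) :
  hom x t -> lim_proj L x = lim_proj L t.
Proof. by move=> u; rewrite -(lim_cone L u) /= ccomp_idl. Qed.

Lemma fibrant_constants_of_matching :
  (forall alpha : C,
     ~ inhabited (MatchCat H alpha) \/ exists t : MatchCat H alpha, weakly_terminal t) ->
  has_fibrant_constants H.
Proof.
move=> cases M Z fibZ alpha h hproj.
have [emptyM | [t termt]] := cases alpha.
  exact: fibZ (limit_empty_terminal _ emptyM) h.
pose L := mc_lim (MatchDiag H alpha (const_functor C Z)).
apply: (@iso_fib M _ _ h (lim_proj L t)); first exact: hproj.
apply: limit_endo_id => x; have [u] := termt x.
by rewrite ccomp_assoc hproj /= ccomp_idl (const_match_proj_eq _ u).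
Qed.

End FibrantConstants.

Definition surjective (A B : Type) (f : A -> B) := forall y : B, exists x, f x = y.

Lemma mono_inj_strict p q (f : 'I_p.+1 -> 'I_q.+1) :
  {homo f : i j / i <= j} -> injective f -> {homo f : i j / i < j}.
Proof.
move=> mf inj i j lij; rewrite ltn_neqAle mf ?(ltnW lij) // andbT.
by apply: contraTneq lij => /val_inj/inj ->; rewrite ltnn.
Qed.

Section MonotoneMaps.
Variables p q : nat.
Implicit Types f : 'I_p.+1 -> 'I_q.+1.

Lemma inj_ord_leq f : injective f -> p <= q.
Proof. by move=> inj; have := @leq_card _ _ f inj; rewrite !card_ord. Qed.

Definition section_at f (j : 'I_p.+1) (k : 'I_q.+1) : 'I_p.+1 :=
  if k == f j then j else odflt j [pick i | f i == k].

Lemma section_atK f j : surjective f -> cancel (section_at f j) f.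
Proof.
move=> sf k; rewrite /section_at; case: eqP => [->//|_].
case: pickP => [i /eqP //| nof]; have [i ei] := sf k.
by move: (nof i); rewrite ei eqxx.
Qed.

Lemma section_at_point f j : section_at f j (f j) = j.
Proof. by rewrite /section_at eqxx. Qed.

Lemma section_at_mono f j : {homo f : x y / x <= y} -> surjective f ->
  {homo section_at f j : k l / k <= l}.
Proof.
move=> mf sf k l lkl; rewrite leqNgt; apply: contraTN lkl => ltlk.
have := mf _ _ (ltnW ltlk); rewrite !section_atK // => lelk.
by rewrite -ltnNge ltn_neqAle lelk andbT; apply: contraTneq ltlk => /val_inj ->; rewrite ltnn.
Qed.

Lemma surj_ord_leq f : surjective f -> q <= p.
Proof.
move=> sf; have := @leq_card _ _ (section_at f ord0) (can_inj (section_atK ord0 sf)).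
by rewrite !card_ord.
Qed.

Definition img_seq f := [seq k <- iota 0 q.+1 | [exists i, val (f i) == k]].

Lemma img_seq_sorted f : sorted ltn (img_seq f).
Proof. apply: sorted_filter; [exact: ltn_trans | exact: iota_ltn_sorted]. Qed.

Lemma img_seq_uniq f : uniq (img_seq f).
Proof. exact: (sorted_uniq ltn_trans ltnn (img_seq_sorted f)). Qed.

Lemma mem_img_seq f k : (k \in img_seq f) = [exists i, val (f i) == k].
Proof.
rewrite mem_filter mem_iota add0n /=; case: existsP => //= -[i /eqP <-].
exact: ltn_ord.
Qed.

Lemma img_seq_ltn f k : k \in img_seq f -> k < q.+1.
Proof. by rewrite mem_filter mem_iota add0n => /andP[_ /andP[]]. Qed.

Lemma img_seq_strict_enum f c (e : 'I_p.+1 -> 'I_c.+1) (d : 'I_c.+1 -> 'I_q.+1) :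
  surjective e -> {homo d : k l / k < l} -> (forall i, d (e i) = f i) ->
  [seq val (d k) | k <- enum 'I_c.+1] = img_seq f.
Proof.
move=> se sd de; apply: (irr_sorted_eq ltn_trans ltnn).
- rewrite sorted_map; apply: (sub_sorted (e := relpre val ltn)); first exact: sd.
  by rewrite -sorted_map val_enum_ord iota_ltn_sorted.
- exact: img_seq_sorted.
move=> k; rewrite mem_img_seq; apply/mapP/existsP => [[l _ ->]|[i /eqP <-]].
  by have [i ei] := se l; exists i; rewrite -de ei.
by exists (e i); rewrite ?mem_enum ?de.
Qed.

Lemma img_seq_size f c (e : 'I_p.+1 -> 'I_c.+1) (d : 'I_c.+1 -> 'I_q.+1) :
  surjective e -> {homo d : k l / k < l} -> (forall i, d (e i) = f i) ->
  c.+1 = size (img_seq f).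
Proof. by move=> se sd de; rewrite -(img_seq_strict_enum se sd de) size_map size_enum_ord. Qed.

Lemma img_seq_nth f c (e : 'I_p.+1 -> 'I_c.+1) (d : 'I_c.+1 -> 'I_q.+1) :
  surjective e -> {homo d : k l / k < l} -> (forall i, d (e i) = f i) ->
  forall k, val (d k) = nth 0 (img_seq f) k.
Proof.
move=> se sd de k; rewrite -(img_seq_strict_enum se sd de).
by rewrite (nth_map k) ?size_enum_ord // nth_ord_enum.
Qed.

Lemma epi_mono_fact_uniq f c (e : 'I_p.+1 -> 'I_c.+1) (d : 'I_c.+1 -> 'I_q.+1)
    c' (e' : 'I_p.+1 -> 'I_c'.+1) (d' : 'I_c'.+1 -> 'I_q.+1) :
  surjective e -> {homo d : k l / k <= l} -> injective d -> (forall i, d (e i) = f i) ->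
  surjective e' -> {homo d' : k l / k <= l} -> injective d' -> (forall i, d' (e' i) = f i) ->
  [/\ c = c', forall (k : 'I_c.+1) (k' : 'I_c'.+1), val k = val k' -> val (d k) = val (d' k')
    & forall i, val (e i) = val (e' i)].
Proof.
move=> se md id de se' md' id' de'.
have sd := mono_inj_strict md id; have sd' := mono_inj_strict md' id'.
have cc : c = c' by apply/succn_inj; rewrite (img_seq_size se sd de) (img_seq_size se' sd' de').
subst c'.
have dd (k k' : 'I_c.+1) : val k = val k' -> val (d k) = val (d' k').
  by move=> /val_inj <-; rewrite (img_seq_nth se sd de) (img_seq_nth se' sd' de').
split=> // i; congr val; apply: id; apply: val_inj.
by rewrite (dd (e' i) (e' i)) // de de'.
Qed.

Definition img_dim f := (size (img_seq f)).-1.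

Lemma f_in_img_seq f i : val (f i) \in img_seq f.
Proof. by rewrite mem_img_seq; apply/existsP; exists i. Qed.

Lemma img_dimS f : (img_dim f).+1 = size (img_seq f).
Proof. by rewrite /img_dim prednK //; have := f_in_img_seq f ord0; case: img_seq. Qed.

Definition img_proj f (i : 'I_p.+1) : 'I_(img_dim f).+1 :=
  inord (index (val (f i)) (img_seq f)).

Definition img_incl f (k : 'I_(img_dim f).+1) : 'I_q.+1 := inord (nth 0 (img_seq f) k).
Arguments img_incl : clear implicits.

Lemma img_projE f i : val (img_proj f i) = index (val (f i)) (img_seq f).
Proof. by rewrite /img_proj /= inordK // img_dimS index_mem f_in_img_seq. Qed.

Lemma img_inclE f (k : 'I_(img_dim f).+1) : val (img_incl f k) = nth 0 (img_seq f) k.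
Proof. by rewrite /img_incl /= inordK //; apply/img_seq_ltn/mem_nth; rewrite -img_dimS. Qed.

Lemma img_incl_proj f i : img_incl f (img_proj f i) = f i.
Proof. by apply: val_inj; rewrite img_inclE img_projE nth_index ?f_in_img_seq. Qed.

Lemma img_proj_mono f : {homo f : i j / i <= j} -> {homo img_proj f : i j / i <= j}.
Proof.
move=> mf i j lij; rewrite !img_projE leqNgt; apply: contraTN lij => lt.
have ltf := sorted_ltn_index ltn_trans (img_seq_sorted f) _ _
  (f_in_img_seq f j) (f_in_img_seq f i) lt.
rewrite -ltnNge; apply: contraTT ltf; rewrite -!leqNgt; exact: mf.
Qed.

Lemma img_proj_surj f : surjective (img_proj f).
Proof.
move=> k; have : nth 0 (img_seq f) k \in img_seq f by apply: mem_nth; rewrite -img_dimS.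
rewrite mem_img_seq => /existsP[i /eqP ei]; exists i; apply: val_inj.
by rewrite img_projE ei index_uniq ?img_seq_uniq // -img_dimS.
Qed.

Lemma img_incl_strict f : {homo img_incl f : k l / k < l}.
Proof.
move=> k l lkl; rewrite !img_inclE.
by apply: (sorted_ltn_nth ltn_trans 0 (img_seq_sorted f)); rewrite // inE -img_dimS.
Qed.

Lemma img_incl_mono f : {homo img_incl f : k l / k <= l}.
Proof.
move=> k l; rewrite leq_eqVlt => /orP[/eqP/val_inj -> //|/img_incl_strict]; exact: ltnW.
Qed.

Lemma img_incl_inj f : injective (img_incl f).
Proof.
move=> k l ekl; apply: val_inj.
by case: (ltngtP (val k) (val l)) => // /img_incl_strict; rewrite ekl ltnn.
Qed.

End MonotoneMaps.

Arguments img_incl {p q} f k.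

Lemma inj_ord_surj p q (f : 'I_p.+1 -> 'I_q.+1) : p = q -> injective f -> surjective f.
Proof. by move=> epq; subst q => inj k; have /codomP[i ->] := injF_onto inj k; exists i. Qed.

Lemma mono_inj_ord_val p q (f : 'I_p.+1 -> 'I_q.+1) : p = q ->
  {homo f : i j / i <= j} -> injective f -> forall k, val (f k) = val k.
Proof.
move=> epq mf inj k; subst q.
(* [f = f \o id = id \o f] are two epi-mono factorizations of [f]. *)
have [_ _ /(_ k) ekf] := epi_mono_fact_uniq (e := id) (d := f) (e' := f) (d' := id)
  (fun k => ex_intro _ k erefl) mf inj (fun=> erefl)
  (inj_ord_surj erefl inj) (fun _ _ h => h) (fun _ _ e => e) (fun=> erefl).
exact: esym ekf.
Qed.

Lemma mono_surj_ord_val p q (f : 'I_p.+1 -> 'I_q.+1) : p = q ->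
  {homo f : i j / i <= j} -> surjective f -> forall k, val (f k) = val k.
Proof.
move=> epq mf sf k; subst q.
have sK := section_atK ord0 sf.
have fs := mono_inj_ord_val erefl (section_at_mono ord0 mf sf) (can_inj sK).
have sk : section_at f ord0 k = k by apply: val_inj; exact: fs.
by rewrite -{1}sk sK.
Qed.

Lemma mono_surj_not_inj_ltn p q (f : 'I_p.+1 -> 'I_q.+1) :
  {homo f : i j / i <= j} -> surjective f -> ~ injective f -> q < p.
Proof.
move=> mf sf ninj; rewrite ltn_neqAle (surj_ord_leq sf) andbT.
apply/eqP => eqp; apply: ninj => x y /(congr1 val).
by rewrite !(mono_surj_ord_val (esym eqp) mf sf) => /val_inj.
Qed.

Lemma ltn_sum (I : finType) (P Q : I -> nat) j :
  (forall i, P i <= Q i) -> P j < Q j -> \sum_i P i < \sum_i Q i.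
Proof.
move=> le lt; rewrite (bigD1 j) //= [X in _ < X](bigD1 j) //= -addSn.
by apply: leq_add => //; apply: leq_sum.
Qed.

Lemma leq_sum_eq (I : finType) (P Q : I -> nat) :
  (forall i, P i <= Q i) -> \sum_i Q i <= \sum_i P i -> forall i, P i = Q i.
Proof.
move=> le sle j; apply/eqP; rewrite eqn_leq le /=; apply: contraTT sle.
by rewrite -!ltnNge; apply: ltn_sum.
Qed.

Section Multisimplices.
Variables (n : nat) (X : MSSet n).
Notation DC := (DeltaCat X).

Definition dxmap (a b : DC) (f : hom a b) (i : 'I_n.+1) :
  'I_(projT1 a i).+1 -> 'I_(projT1 b i).+1 := proj1_sig (proj1_sig f i).
Arguments dxmap {a b} f i.

Lemma dxmap_mono (a b : DC) (f : hom a b) i : {homo dxmap f i : x y / x <= y}.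
Proof. exact: (proj2_sig (proj1_sig f i)). Qed.
Arguments dxmap_mono {a b} f i.

Lemma dxmap_comp (a b c : DC) (f : hom a b) (g : hom b c) i x :
  dxmap (g \oc f) i x = dxmap g i (dxmap f i x).
Proof. by []. Qed.

Lemma dx_hom_eq (a b : DC) (f g : hom a b) :
  (forall i x, dxmap f i x = dxmap g i x) -> f = g.
Proof.
move=> e; apply: sig_eq_irr; apply: mhom_eq => i.
by apply: functional_extensionality => x; apply: e.
Qed.

Lemma delta_deg_inv_leq (a b : DC) (f : hom a b) :
  delta_inv f -> delta_deg b <= delta_deg a.
Proof. by move=> invf; apply: leq_sum => i _; apply: surj_ord_leq (invf i). Qed.

Lemma delta_deg_dir_leq (a b : DC) (f : hom a b) :
  delta_dir f -> delta_deg a <= delta_deg b.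
Proof. by move=> dirf; apply: leq_sum => i _; apply: inj_ord_leq (dirf i). Qed.

Lemma dim_eq_of_deg_leq (a b : DC) :
  (forall i, projT1 a i <= projT1 b i) -> delta_deg b <= delta_deg a -> projT1 a = projT1 b.
Proof. by move=> le sle; apply: functional_extensionality; apply: leq_sum_eq. Qed.

Lemma dx_section (a b : DC) (s : hom a b) : delta_inv s ->
  forall J : (forall i, 'I_(projT1 a i).+1),
  exists t : hom b a, (forall i, cancel (dxmap t i) (dxmap s i)) /\
                      (forall i, dxmap t i (dxmap s i (J i)) = J i).
Proof.
move=> invs J.
pose tm : mhom (projT1 b) (projT1 a) := fun i =>
  exist _ (section_at (dxmap s i) (J i)) (section_at_mono (J i) (dxmap_mono s i) (invs i)).
have stm : mcomp (proj1_sig s) tm = mid (projT1 b).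
  apply: mhom_eq => i; apply: functional_extensionality => k /=.
  exact: section_atK (invs i) k.
have acttm : ms_act X tm (projT2 a) = projT2 b.
  by rewrite -(proj2_sig s) -ms_act_comp stm ms_act_id.
exists (exist (fun g : mhom _ _ => ms_act X g (projT2 a) = projT2 b) tm acttm).
by split=> i; [exact: section_atK (invs i) | exact: section_at_point].
Qed.

Lemma act_section (a b : DC) (s : hom a b) (t : hom b a) :
  (forall i, cancel (dxmap t i) (dxmap s i)) ->
  cancel (ms_act X (proj1_sig s)) (ms_act X (proj1_sig t)).
Proof.
move=> tK y; rewrite -ms_act_comp.
have -> : mcomp (proj1_sig s) (proj1_sig t) = mid (projT1 b).
  by apply: mhom_eq => i; apply: functional_extensionality => k /=; apply: tK.
exact: ms_act_id.
Qed.

Lemma dx_inv_existT_eq (a b b' : DC) (s : hom a b) (t : hom a b') :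
  delta_inv s -> projT1 b = projT1 b' ->
  (forall i x, val (dxmap s i x) = val (dxmap t i x)) ->
  existT (fun c : DC => hom a c) b s = existT (fun c : DC => hom a c) b' t.
Proof.
case: b s => pb yb s; case: b' t => pb' yb' t invs /= epb; subst pb' => est.
have est' : proj1_sig s = proj1_sig t.
  apply: mhom_eq => i; apply: functional_extensionality => x.
  by apply: val_inj; apply: est.
have [r [rK _]] := dx_section invs (fun i => ord0).
(* [s] has a section, so its action on multisimplices is injective. *)
have eyb : yb = yb'.
  rewrite -(act_section rK yb) -(act_section rK yb'); congr (ms_act X _ _).
  by move: (proj2_sig s) (proj2_sig t); rewrite /= est' => -> ->.
subst yb'; have -> : s = t by apply: sig_eq_irr.
by [].
Qed.

Lemma delta_dir_deg (a b : DC) (f : hom a b) :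
  delta_dir f -> not_identity f -> delta_deg a < delta_deg b.
Proof.
move=> dirf nidf; rewrite ltn_neqAle (delta_deg_dir_leq dirf) andbT.
apply/eqP => edeg; apply: nidf.
have sle : delta_deg b <= delta_deg a by rewrite edeg.
have edim := dim_eq_of_deg_leq (fun i => inj_ord_leq (dirf i)) sle.
have edimi i := equal_f edim i.
apply: dx_inv_existT_eq (esym edim) _ => [i|i x /=].
  exact: inj_ord_surj (edimi i) (dirf i).
exact: mono_inj_ord_val (edimi i) (dxmap_mono f i) (dirf i) x.
Qed.

Lemma delta_inv_deg (a b : DC) (f : hom a b) :
  delta_inv f -> not_identity f -> delta_deg b < delta_deg a.
Proof.
move=> invf nidf; rewrite ltn_neqAle (delta_deg_inv_leq invf) andbT.
apply/eqP => edeg; apply: nidf.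
have sle : delta_deg a <= delta_deg b by rewrite edeg.
have edim := dim_eq_of_deg_leq (fun i => surj_ord_leq (invf i)) sle.
apply: (dx_inv_existT_eq invf edim) => i x /=.
exact: mono_surj_ord_val (esym (equal_f edim i)) (dxmap_mono f i) (invf i) x.
Qed.

Lemma dx_fact (a b : DC) (f : hom a b) :
  exists (c : DC) (g : hom a c) (h : hom c b), [/\ delta_inv g, delta_dir h & h \oc g = f].
Proof.
pose cm : mindex n := fun i => img_dim (dxmap f i).
pose gm : mhom (projT1 a) cm := fun i =>
  exist _ (img_proj (dxmap f i)) (img_proj_mono (dxmap_mono f i)).
pose hm : mhom cm (projT1 b) := fun i =>
  exist _ (img_incl (dxmap f i)) (@img_incl_mono _ _ (dxmap f i)).
have hgm : mcomp hm gm = proj1_sig f.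
  apply: mhom_eq => i; apply: functional_extensionality => x /=.
  exact: img_incl_proj.
pose c : DC := existT _ cm (ms_act X hm (projT2 b)).
have actg : ms_act X gm (projT2 c) = projT2 a.
  by rewrite /= -ms_act_comp hgm (proj2_sig f).
exists c, (exist (fun g : mhom _ _ => ms_act X g (projT2 c) = projT2 a) gm actg),
  (exist (fun h : mhom _ _ => ms_act X h (projT2 b) = projT2 c) hm erefl).
split=> [i|i|]; first exact: img_proj_surj.
  exact: img_incl_inj.
by apply: dx_hom_eq => i x; rewrite dxmap_comp /dxmap /= img_incl_proj.
Qed.

Lemma dx_fact_uniq (a b : DC) (f : hom a b) (c c' : DC)
    (g : hom a c) (h : hom c b) (g' : hom a c') (h' : hom c' b) :
  delta_inv g -> delta_dir h -> h \oc g = f ->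
  delta_inv g' -> delta_dir h' -> h' \oc g' = f ->
  existT (fun c : DC => (hom a c * hom c b)%type) c (g, h)
  = existT (fun c : DC => (hom a c * hom c b)%type) c' (g', h').
Proof.
case: c g h => cm z g h; case: c' g' h' => cm' z' g' h'.
move=> invg dirh hg invg' dirh' hg'.
have hg'i i x : dxmap h' i (dxmap g' i x) = dxmap h i (dxmap g i x).
  by rewrite -!dxmap_comp hg hg'.
have U i := epi_mono_fact_uniq (invg i) (dxmap_mono h i) (dirh i) (fun=> erefl)
  (invg' i) (dxmap_mono h' i) (dirh' i) (hg'i i).
have ecm : cm = cm' by apply: functional_extensionality => i; case: (U i).
subst cm'.
have eh : proj1_sig h = proj1_sig h'.
  apply: mhom_eq => i; apply: functional_extensionality => x.
  by apply: val_inj; case: (U i) => _ Uh _; apply: Uh.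
have ez : z = z' by move: (proj2_sig h) (proj2_sig h') => /= <- <-; rewrite eh.
subst z'; have {eh} -> : h = h' by apply: sig_eq_irr.
have -> : g = g'.
  by apply: dx_hom_eq => i x; apply: val_inj; case: (U i) => _ _; apply.
by [].
Qed.

Lemma delta_inv_comp (a b c : DC) (f : hom a b) (g : hom b c) :
  delta_inv f -> delta_inv g -> delta_inv (g \oc f).
Proof. by move=> invf invg i y; have [x <-] := invg i y; have [w <-] := invf i x; exists w. Qed.

Lemma delta_dir_comp (a b c : DC) (f : hom a b) (g : hom b c) :
  delta_dir f -> delta_dir g -> delta_dir (g \oc f).
Proof. by move=> dirf dirg i; apply: inj_comp. Qed.

Lemma delta_reedy : IsReedy (@delta_deg n X) (@delta_dir n X) (@delta_inv n X).
Proof.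
split.
- by move=> a i x y.
- exact: delta_dir_comp.
- by move=> a i y; exists y.
- exact: delta_inv_comp.
- exact: delta_dir_deg.
- exact: delta_inv_deg.
- move=> a b f; have [c [g [h [invg dirh hg]]]] := dx_fact f.
  by exists c, g, h.
- exact: dx_fact_uniq.
Qed.

Definition nondegenerate (b : DC) := forall (c : DC) (g : hom b c), delta_inv g -> delta_dir g.

Lemma nondegenerate_dir (b c : DC) (u : hom b c) : nondegenerate b -> delta_dir u.
Proof.
move=> ndb; have [d [g [h [invg dirh <-]]]] := dx_fact u.
exact: delta_dir_comp (ndb _ g invg) dirh.
Qed.
Arguments nondegenerate_dir {b c} u.

Lemma ez_exists (a : DC) : exists (b : DC) (s : hom a b), delta_inv s /\ nondegenerate b.
Proof.
have [m degm] : {m | delta_deg a = m} by exists (delta_deg a).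
elim/ltn_ind: m a degm => m IH a degm.
have [nda | ndna] := classic (nondegenerate a).
  by exists a, (cid a); split=> // i y; exists y.
have [c [g [invg ndirg]]] : exists c (g : hom a c), delta_inv g /\ ~ delta_dir g.
  apply: NNPP => nog; apply: ndna => c g invg.
  by apply: NNPP => ndirg; apply: nog; exists c, g.
have [i ninj] := not_all_ex_not _ _ ndirg.
have ltc : delta_deg c < m.
  rewrite -degm; apply: (ltn_sum (j := i)) => [j|]; first exact: surj_ord_leq (invg j).
  exact: mono_surj_not_inj_ltn (dxmap_mono g i) (invg i) ninj.
have [b [t [invt ndb]]] := IH _ ltc c erefl.
by exists b, (t \oc g); split=> //; apply: delta_inv_comp.
Qed.

Lemma ez_uniq (a b b' : DC) (s : hom a b) (t : hom a b') :
  delta_inv s -> delta_inv t -> nondegenerate b -> nondegenerate b' ->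
  existT (fun c : DC => hom a c) b s = existT (fun c : DC => hom a c) b' t.
Proof.
move=> invs invt ndb ndb'.
(* For a section [r] of [s], [t \oc r] leaves the nondegenerate [b], so it is injective. *)
have [r _] := dx_section invs (fun=> ord0).
have [r' _] := dx_section invt (fun=> ord0).
have edim : projT1 b = projT1 b'.
  apply: functional_extensionality => i; apply/eqP; rewrite eqn_leq.
  by rewrite (inj_ord_leq (nondegenerate_dir (t \oc r) ndb i))
             (inj_ord_leq (nondegenerate_dir (s \oc r') ndb' i)).
apply: (dx_inv_existT_eq invs edim) => i x.
have [r2 [_ r2x]] := dx_section invs (fun=> inord (val x)).
have := mono_inj_ord_val (equal_f edim i) (dxmap_mono (t \oc r2) i)
  (nondegenerate_dir (t \oc r2) ndb i) (dxmap s i x).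
have r2xi := r2x i; rewrite inord_val in r2xi.
by rewrite dxmap_comp r2xi => ->.
Qed.

Lemma ez_factor (a b b0 : DC) (s : hom a b0) (g : hom a b) :
  delta_inv s -> nondegenerate b0 -> delta_inv g ->
  exists u : hom b b0, delta_inv u /\ u \oc g = s.
Proof.
move=> invs ndb0 invg; have [b' [u [invu ndb']]] := ez_exists b.
have E := ez_uniq (delta_inv_comp invg invu) invs ndb' ndb0.
have eb : b' = b0 := f_equal (@projT1 _ _) E.
by subst b'; exists u; split=> //; apply: inj_pair2 E.
Qed.

Lemma delta_match_cases (alpha : DC) :
  ~ inhabited (MatchCat delta_reedy alpha) \/
  exists t : MatchCat delta_reedy alpha, weakly_terminal t.
Proof.
have [b0 [s [invs ndb0]]] := ez_exists alpha.
have [nids | ids] := classic (not_identity s).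
  right; exists (existT _ b0 (exist _ s (conj invs nids))) => x.
  case: x => b [g [invg nidg]].
  have [u [invu ug]] := ez_factor invs ndb0 invg.
  by constructor; exists u.
left=> -[[b [g [invg nidg]]]].
have [u [invu _]] := ez_factor invs ndb0 invg.
have eb0 : b0 = alpha := f_equal (@projT1 _ _) (NNPP _ ids).
have := leq_ltn_trans (delta_deg_inv_leq invu) (delta_inv_deg invg nidg).
by rewrite eb0 ltnn.
Qed.

End Multisimplices.

Theorem proposition5p5 (n : nat) (hn : 1 <= n) (X : MSSet n) :
  exists H : IsReedy (@delta_deg n X) (@delta_dir n X) (@delta_inv n X),
    has_fibrant_constants H.
Proof.
exists (delta_reedy X).
exact: fibrant_constants_of_matching (@delta_match_cases n X).
Qed.
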